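(* Let $\mathbf{K}$ be a field of characteristic different from $2$ and let $A$ be a (not necessarily associative) algebra over $\mathbf{K}$. For $a,b,c\in A$ put $\langle a,b,c\rangle=(ab)c-a(bc)+b(ac)$. Then $A$ is a unary Leibniz algebra if and only if $A$ satisfies the identities $$\langle a,a,a\rangle=0 \quad\text{and}\quad \langle aa,a,a\rangle=0 \qquad\text{for all } a\in A.$$
   Context: A (left) Leibniz algebra is an algebra satisfying $(ab)c=a(bc)-b(ac)$ for all $a,b,c$, i.e. $\langle a,b,c\rangle=0$. An algebra $A$ is called a unary Leibniz algebra if every subalgebra of $A$ generated by a single element is a Leibniz algebra. *)

From HB Require Import structures.
From mathcomp Require Import all_boot all_order all_algebra.
Set Implicit Arguments. Unset Strict Implicit. Unset Printing Implicit Defensive.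
Import GRing.Theory.
Local Open Scope ring_scope.

(* A (not necessarily associative) K-algebra: a K-vector space A (an lmodType)
   with a multiplication mul : A -> A -> A that is K-bilinear. *)
Definition bilinear_mul (K : fieldType) (A : lmodType K) (mul : A -> A -> A) : Prop :=
  (forall (k : K) (x y z : A), mul (k *: x + y) z = k *: mul x z + mul y z) /\
  (forall (k : K) (x y z : A), mul x (k *: y + z) = k *: mul x y + mul x z).

Definition leib (K : fieldType) (A : lmodType K) (mul : A -> A -> A) (a b c : A) : A :=
  mul (mul a b) c - mul a (mul b c) + mul b (mul a c).

Inductive gen1 (K : fieldType) (A : lmodType K) (mul : A -> A -> A) (g : A) : A -> Prop :=
  | gen1_g : gen1 mul g g
  | gen1_0 : gen1 mul g 0
  | gen1_D x y : gen1 mul g x -> gen1 mul g y -> gen1 mul g (x + y)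
  | gen1_Z (k : K) x : gen1 mul g x -> gen1 mul g (k *: x)
  | gen1_M x y : gen1 mul g x -> gen1 mul g y -> gen1 mul g (mul x y).

Definition leibniz_gen1 (K : fieldType) (A : lmodType K) (mul : A -> A -> A) (g : A) : Prop :=
  forall a b c, gen1 mul g a -> gen1 mul g b -> gen1 mul g c -> leib mul a b c = 0.

Definition unary_leibniz (K : fieldType) (A : lmodType K) (mul : A -> A -> A) : Prop :=
  forall g : A, leibniz_gen1 mul g.

From mathcomp Require Import all_boot all_order all_algebra zify.
Set Implicit Arguments. Unset Strict Implicit. Unset Printing Implicit Defensive.
Import GRing.Theory.
Local Open Scope ring_scope.

(* Since <a,a,a> = (aa)a, and then <aa,a,a> = -(aa)(aa), the two identities
   say that (aa)a and (aa)(aa) vanish; halving (char K <> 2) turns this into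
   the vanishing of their partial linearizations.
   Fix g and let g_1 = g, g_(n+1) = g g_n. Evaluated at g and at powers of g,
   the linearized identities show by induction on i + j that g_i g_j = 0 for
   i >= 2: within one degree all these products are equal, and one more
   relation says that twice their common value is 0.
   So the subalgebra S generated by g is K g + W, with W spanned by the g_n,
   n >= 2, and W S = 0. If a = alpha g + w and b = beta g + w', then ab lies
   in W, so (ab)c = 0, while a(bc) = alpha beta g(gc) = b(ac); hence
   <a,b,c> = 0. *)

(* Decision procedure for equalities in an abelian group: both sides are
   reified over a common list of atoms and compared through their integer
   coefficient vectors. *)
Module Abel.

Inductive term := Atom of nat | Add of term & term | Opp of term | Zero.

Fixpoint eval (V : zmodType) (env : seq V) (t : term) : V :=
  match t with
  | Atom n => env`_n
  | Add s t => eval env s + eval env t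
  | Opp t => - eval env t
  | Zero => 0
  end.

Fixpoint addv (u v : seq int) : seq int :=
  match u, v with
  | [::], _ => v
  | _, [::] => u
  | a :: u', b :: v' => a + b :: addv u' v'
  end.

Fixpoint coefs (t : term) : seq int :=
  match t with
  | Atom n => rcons (nseq n 0) 1
  | Add s t => addv (coefs s) (coefs t)
  | Opp t => map -%R (coefs t)
  | Zero => [::]
  end.

Fixpoint comb (V : zmodType) (env : seq V) (c : seq int) : V :=
  if c is a :: c' then head 0 env *~ a + comb (behead env) c' else 0.

Section Soundness.

Variable V : zmodType.

Lemma comb_addv (env : seq V) u v : comb env (addv u v) = comb env u + comb env v.
Proof.
elim: u v env => [|a u IH] [|b v] env /=; rewrite ?addr0 ?add0r //.
by rewrite IH mulrzDr addrACA.
Qed.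

Lemma comb_opp (env : seq V) u : comb env (map -%R u) = - comb env u.
Proof. by elim: u env => [|a u IH] env /=; rewrite ?oppr0 // IH mulrNz opprD. Qed.

Lemma comb_atom (env : seq V) n : comb env (rcons (nseq n 0) 1) = env`_n.
Proof.
elim: n env => [|n IH] [|x env] /=; rewrite ?mul0rz ?mulr1z ?mulr0z ?addr0 ?add0r //.
by rewrite IH nth_nil.
Qed.

Lemma eval_comb (env : seq V) t : eval env t = comb env (coefs t).
Proof.
elim: t => [n|s IHs t IHt|t IHt|] //=.
- by rewrite comb_atom.
- by rewrite comb_addv IHs IHt.
- by rewrite comb_opp IHt.
Qed.

Lemma comb_eq0 (env : seq V) c : all (eq_op^~ 0) c -> comb env c = 0.
Proof.
by elim: c env => [|a c IH] env //= /andP[/eqP -> /IH ->]; rewrite mulr0z addr0.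
Qed.

Lemma eval_eq (env : seq V) s t :
  all (eq_op^~ 0) (coefs (Add s (Opp t))) -> eval env s = eval env t.
Proof. by move/(comb_eq0 env); rewrite -eval_comb => /eqP; rewrite subr_eq0 => /eqP. Qed.

End Soundness.

Ltac mem x l :=
  lazymatch l with
  | x :: _ => constr:(true)
  | _ :: ?l' => mem x l'
  | _ => constr:(false)
  end.

Ltac atoms e env :=
  lazymatch e with
  | (?a + ?b)%R => let env := atoms a env in atoms b env
  | (- ?a)%R => atoms a env
  | 0%R => env
  | _ => lazymatch mem e env with
         | true => env
         | false => constr:(e :: env)
         end
  end.

Ltac index x l :=
  lazymatch l with
  | x :: _ => constr:(0%N)
  | _ :: ?l' => let n := index x l' in constr:(n.+1)
  end.

Ltac reify e env :=
  lazymatch e with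
  | (?a + ?b)%R => let ra := reify a env in let rb := reify b env in constr:(Add ra rb)
  | (- ?a)%R => let ra := reify a env in constr:(Opp ra)
  | 0%R => constr:(Zero)
  | _ => let n := index e env in constr:(Atom n)
  end.

Ltac abel :=
  lazymatch goal with
  | |- @eq ?V ?l ?r =>
    let env := atoms l (@nil V) in
    let env := atoms r env in
    let tl := reify l env in
    let tr := reify r env in
    change (eval env tl = eval env tr);
    apply: eval_eq; vm_compute; reflexivity
  end.

End Abel.

Section NonassociativeAlgebra.

Variables (K : fieldType) (A : lmodType K) (mul : A -> A -> A).
Hypothesis hmul : bilinear_mul mul.

Local Notation "x ** y" := (mul x y) (at level 40, left associativity).

Lemma bmul0l z : 0 ** z = 0.
Proof. by have := hmul.1 (-1) z z z; rewrite !scaleN1r !addNr. Qed.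

Lemma bmul0r z : z ** 0 = 0.
Proof. by have := hmul.2 (-1) z z z; rewrite !scaleN1r !addNr. Qed.

Lemma bmulDl x y z : (x + y) ** z = x ** z + y ** z.
Proof. by have := hmul.1 1 x y z; rewrite !scale1r. Qed.

Lemma bmulDr x y z : z ** (x + y) = z ** x + z ** y.
Proof. by have := hmul.2 1 z x y; rewrite !scale1r. Qed.

Lemma bmulZl k x z : (k *: x) ** z = k *: (x ** z).
Proof. by have := hmul.1 k x 0 z; rewrite !addr0 bmul0l addr0. Qed.

Lemma bmulZr k x z : z ** (k *: x) = k *: (z ** x).
Proof. by have := hmul.2 k z x 0; rewrite !addr0 bmul0r addr0. Qed.

Lemma bmulNl x z : (- x) ** z = - (x ** z).
Proof. by rewrite -scaleN1r bmulZl scaleN1r. Qed.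

Lemma bmulNr x z : z ** (- x) = - (z ** x).
Proof. by rewrite -scaleN1r bmulZr scaleN1r. Qed.

Local Ltac expand := repeat progress rewrite ?bmulDl ?bmulDr ?bmulNl ?bmulNr.

Lemma leib_diag a : leib mul a a a = (a ** a) ** a.
Proof. by rewrite /leib subrK. Qed.

(* [rpow g n] is the right-normed power g (g (... g)) of degree n.+1. *)
Fixpoint rpow (g : A) (n : nat) : A := if n is n'.+1 then g ** rpow g n' else g.
Arguments rpow g n%_N.

Section Polarization.

Hypothesis two_neq0 : (2%:R : K) != 0.
Hypothesis cube0 : forall a, (a ** a) ** a = 0.
Hypothesis sqsq0 : forall a, (a ** a) ** (a ** a) = 0.

Local Notation jordan a b := (a ** b + b ** a).

Lemma twice_eq0 (v : A) : v + v = 0 -> v = 0.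
Proof.
move=> vv0; have /eqP : (2%:R : K) *: v = 0 by rewrite scaler_nat mulr2n.
by rewrite scaler_eq0 (negbTE two_neq0) => /eqP.
Qed.

Lemma cube_polar21 a b : (a ** b) ** a + (b ** a) ** a + (a ** a) ** b = 0.
Proof.
apply: twice_eq0.
transitivity (((a + b) ** (a + b)) ** (a + b) - ((a - b) ** (a - b)) ** (a - b)
              - (b ** b) ** b - (b ** b) ** b).
  by expand; Abel.abel.
by rewrite !cube0 !subr0.
Qed.

Lemma cube_polar111 a b c :
  (a ** b) ** c + (b ** a) ** c + (a ** c) ** b + (c ** a) ** b
  + (b ** c) ** a + (c ** b) ** a = 0.
Proof.
transitivity (((a + c) ** b) ** (a + c) + (b ** (a + c)) ** (a + c) + ((a + c) ** (a + c)) ** b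
  - ((a ** b) ** a + (b ** a) ** a + (a ** a) ** b)
  - ((c ** b) ** c + (b ** c) ** c + (c ** c) ** b)).
  by expand; Abel.abel.
by rewrite !cube_polar21 !subr0.
Qed.

Lemma sqsq_polar22 a b :
  (b ** b) ** (a ** a) + (a ** a) ** (b ** b) + jordan a b ** jordan a b = 0.
Proof.
apply: twice_eq0.
transitivity (((a + b) ** (a + b)) ** ((a + b) ** (a + b))
  + ((a - b) ** (a - b)) ** ((a - b) ** (a - b))
  - (a ** a) ** (a ** a) - (a ** a) ** (a ** a) - (b ** b) ** (b ** b) - (b ** b) ** (b ** b)).
  by expand; Abel.abel.
by rewrite !sqsq0 !subr0 addr0.
Qed.

Lemma sqsq_polar31 a b :
  jordan a b ** (a ** a) + (a ** a) ** jordan a b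
  + (jordan b a ** (b ** b) + (b ** b) ** jordan b a) = 0.
Proof.
transitivity (((a + b) ** (a + b)) ** ((a + b) ** (a + b))
  - (a ** a) ** (a ** a) - (b ** b) ** (b ** b)
  - ((b ** b) ** (a ** a) + (a ** a) ** (b ** b) + jordan a b ** jordan a b)).
  by expand; Abel.abel.
by rewrite !sqsq0 sqsq_polar22 !subr0.
Qed.

Lemma sqsq_polar211 a b c :
  jordan b c ** (a ** a) + (a ** a) ** jordan b c
  + jordan a b ** jordan a c + jordan a c ** jordan a b = 0.
Proof.
transitivity ((((b + c) ** (b + c)) ** (a ** a) + (a ** a) ** ((b + c) ** (b + c))
                + jordan a (b + c) ** jordan a (b + c))
  - ((b ** b) ** (a ** a) + (a ** a) ** (b ** b) + jordan a b ** jordan a b)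
  - ((c ** c) ** (a ** a) + (a ** a) ** (c ** c) + jordan a c ** jordan a c)).
  by expand; Abel.abel.
by rewrite !sqsq_polar22 !subr0.
Qed.

Section RightPowers.

Variable g : A.

Local Notation U i j := (rpow g i ** rpow g j).

Lemma rpow_sqr0 k :
  (0 < k)%N -> (forall i, (0 < i < k)%N -> rpow g i ** g = 0) -> U k k = 0.
Proof.
elim: k => [//|[|k] IHk] _ rpow_g0; first exact: (sqsq0 g).
have rr0 : U k.+1 k.+1 = 0 by apply: IHk => // i ?; apply: rpow_g0; lia.
have rg0 : rpow g k.+1 ** g = 0 by apply: rpow_g0; lia.
by have := sqsq_polar22 (rpow g k.+1) g; rewrite rr0 rg0 bmul0l bmul0r !add0r.
Qed.

Section Step.

Variable s : nat.
Hypothesis IH : forall i j, (0 < i)%N -> (i + j < s)%N -> U i j = 0.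

Lemma rpow_mulg0 i : (0 < i < s)%N -> rpow g i ** g = 0.
Proof. by case/andP=> i0 lt_is; apply: (IH (j := 0%N) i0); rewrite addn0. Qed.

Lemma rpow_mul_transfer p q : (p.+1 + q = s)%N -> U p.+1 q + U q.+1 p = 0.
Proof.
wlog le_pq : p q / (p <= q)%N => [sym Es|].
  by case: (leqP p q) => [|/ltnW] ?; [|rewrite addrC]; apply: sym => //; lia.
case: p q le_pq => [|p] [|q] // _ Es.
- by rewrite /= cube0 addr0.
- have gq0 : rpow g q.+1 ** g = 0 by apply: rpow_mulg0; lia.
  by have := cube_polar21 g (rpow g q.+1); rewrite gq0 bmul0l addr0 addrC.
- have gp0 : rpow g p.+1 ** g = 0 by apply: rpow_mulg0; lia.
  have gq0 : rpow g q.+1 ** g = 0 by apply: rpow_mulg0; lia.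
  have pq0 : U p.+1 q.+1 = 0 by apply: IH; lia.
  have qp0 : U q.+1 p.+1 = 0 by apply: IH; lia.
  have := cube_polar111 g (rpow g p.+1) (rpow g q.+1).
  by rewrite gp0 gq0 pq0 qp0 !bmul0l !addr0.
Qed.

Lemma rpow_mul_anticomm p q : (p.+1 + q.+1 = s)%N -> U p.+1 q.+1 + U q.+1 p.+1 = 0.
Proof.
wlog le_pq : p q / (p <= q)%N => [sym Es|].
  by case: (leqP p q) => [|/ltnW] ?; [|rewrite addrC]; apply: sym => //; lia.
case: p q le_pq => [|p] [|q] // _ Es.
- by rewrite /= sqsq0 addr0.
- have gq0 : rpow g q.+1 ** g = 0 by apply: rpow_mulg0; lia.
  have qq0 : U q.+1 q.+1 = 0.
    by apply: rpow_sqr0 => // i ?; apply: rpow_mulg0; lia.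
  have := sqsq_polar31 g (rpow g q.+1).
  by rewrite gq0 qq0 bmul0l bmul0r !addr0 addrC.
- have gp0 : rpow g p.+1 ** g = 0 by apply: rpow_mulg0; lia.
  have gq0 : rpow g q.+1 ** g = 0 by apply: rpow_mulg0; lia.
  have pq0 : U p.+1 q.+1 = 0 by apply: IH; lia.
  have qp0 : U q.+1 p.+1 = 0 by apply: IH; lia.
  have := sqsq_polar211 g (rpow g p.+1) (rpow g q.+1).
  by rewrite gp0 gq0 pq0 qp0 !addr0 bmul0l bmul0r !add0r.
Qed.

Lemma rpow_mul_shift i j : (0 < i)%N -> (i + j.+1 = s)%N -> U i j.+1 = U i.+1 j.
Proof.
case: i => // p _ Es; apply: (addIr (U j.+1 p.+1)).
by rewrite rpow_mul_anticomm // addrC rpow_mul_transfer // addnC.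
Qed.

Lemma rpow_mul_const i j : (0 < i)%N -> (i + j = s)%N -> U i j = U s 0.
Proof.
elim: j i => [|j IHj] i i0 Es; first by rewrite -Es addn0.
by rewrite rpow_mul_shift // IHj // addSnnS.
Qed.

Lemma rpow_mul0_step i j : (0 < i)%N -> (i + j = s)%N -> U i j = 0.
Proof.
move=> i0 Es; rewrite (rpow_mul_const i0 Es).
have s_gt0 : (0 < s)%N by lia.
have Es1 : (1 + s.-1 = s)%N by lia.
apply: twice_eq0; rewrite -{1}(rpow_mul_const _ Es1) //.
by have := rpow_mul_transfer Es1; rewrite prednK.
Qed.

End Step.

Lemma rpow_mul0 i j : (0 < i)%N -> U i j = 0.
Proof.
move=> i0; move Es: (i + j) => s.
elim/ltn_ind: s i j i0 Es => s IHs i j i0 Es.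
by apply: (rpow_mul0_step _ i0 Es) => i' j' i'0 lt; apply: (IHs _ lt).
Qed.

End RightPowers.

End Polarization.

Section OneGenerated.

Variable g : A.
Hypothesis rpow_lmul0 : forall i j, (0 < i)%N -> rpow g i ** rpow g j = 0.

Inductive rpow_span : A -> Prop :=
  | span_rpow n : rpow_span (rpow g n.+1)
  | span0 : rpow_span 0
  | spanD x y : rpow_span x -> rpow_span y -> rpow_span (x + y)
  | spanZ k x : rpow_span x -> rpow_span (k *: x).

Definition rpow_coset (a : K) (z : A) := exists2 w, rpow_span w & z = a *: g + w.

Lemma span_mul_rpow w j : rpow_span w -> w ** rpow g j = 0.
Proof.
elim=> [n||x y _ IHx _ IHy|k x _ IHx].
- exact: rpow_lmul0.
- exact: bmul0l.
- by rewrite bmulDl IHx IHy addr0.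
- by rewrite bmulZl IHx scaler0.
Qed.

Lemma span_mul_coset w a z : rpow_span w -> rpow_coset a z -> w ** z = 0.
Proof.
move=> sw [v sv ->]; rewrite bmulDr bmulZr (span_mul_rpow 0 sw) scaler0 add0r.
elim: sv => [n||x y _ IHx _ IHy|k x _ IHx].
- exact: span_mul_rpow.
- exact: bmul0r.
- by rewrite bmulDr IHx IHy addr0.
- by rewrite bmulZr IHx scaler0.
Qed.

Lemma mulg_coset_span a z : rpow_coset a z -> rpow_span (g ** z).
Proof.
case=> w sw ->; rewrite bmulDr bmulZr; apply: spanD; first exact: (spanZ _ (span_rpow 0)).
elim: sw => [n||x y _ IHx _ IHy|k x _ IHx].
- exact: (span_rpow n.+1).
- by rewrite bmul0r; apply: span0.
- by rewrite bmulDr; apply: spanD.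
- by rewrite bmulZr; apply: spanZ.
Qed.

Lemma mul_coset a b z y : rpow_coset a z -> rpow_coset b y -> z ** y = a *: (g ** y).
Proof. by case=> w sw -> cy; rewrite bmulDl bmulZl (span_mul_coset sw cy) addr0. Qed.

Lemma gen1_coset z : gen1 mul g z -> exists a, rpow_coset a z.
Proof.
elim=> {z} [||x y _ [a [v sv ->]] _ [b [w sw ->]]|k x _ [a [v sv ->]]|x y _ [a cx] _ [b cy]].
- by exists 1, 0; [apply: span0 | rewrite scale1r addr0].
- by exists 0, 0; [apply: span0 | rewrite scale0r addr0].
- exists (a + b), (v + w); first exact: spanD.
  by rewrite scalerDl addrACA.
- exists (k * a), (k *: v); first exact: spanZ.
  by rewrite scalerDr scalerA.
- exists 0, (a *: (g ** y)); first exact/spanZ/(mulg_coset_span cy).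
  by rewrite (mul_coset cx cy) scale0r add0r.
Qed.

Lemma gen1_leibniz : leibniz_gen1 mul g.
Proof.
move=> a b c Sa Sb Sc.
have [al ca] := gen1_coset Sa; have [be cb] := gen1_coset Sb; have [? cc] := gen1_coset Sc.
have [? cbc] := gen1_coset (gen1_M Sb Sc); have [? cac] := gen1_coset (gen1_M Sa Sc).
rewrite /leib (mul_coset ca cb) bmulZl (span_mul_coset (mulg_coset_span cb) cc).
rewrite (mul_coset ca cbc) (mul_coset cb cac) (mul_coset cb cc) (mul_coset ca cc).
by rewrite scaler0 sub0r !bmulZr !scalerA mulrC addNr.
Qed.

End OneGenerated.

End NonassociativeAlgebra.

Unset Implicit Arguments.

Theorem theorem1 (K : fieldType) (hK : (2%:R : K) != 0)
  (A : lmodType K) (mul : A -> A -> A) (hmul : bilinear_mul mul) :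
  unary_leibniz mul <->
  (forall a : A, leib mul a a a = 0 /\ leib mul (mul a a) a a = 0).
Proof.
split=> [unary a | leib0 g].
  by split; apply: (unary a); do ?apply: gen1_M; apply: gen1_g.
have cube0 a : mul (mul a a) a = 0 by rewrite -leib_diag; case: (leib0 a).
have sqsq0 a : mul (mul a a) (mul a a) = 0.
  have [_] := leib0 a; rewrite /leib cube0 (bmul0l hmul) (bmul0r hmul) sub0r addr0.
  by move/eqP; rewrite oppr_eq0 => /eqP.
by apply: (gen1_leibniz hmul) => i j; apply: (rpow_mul0 hmul hK cube0 sqsq0).
Qed.
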